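(* Let $\widehat{\mathbf{H}}_u,\mathbf{L}_1\in\mathbb{R}^{N_s\times N_b}$, $\lambda>0$, $\gamma_u\ge0$, $\beta_u\in\mathbb{R}$, $\mu_0>0$, $\rho>1$, $\mu_{\max}\ge\mu_0$. Let $f(\mathbf{L})=\|\mathbf{L}\|_*+\gamma_u\|\mathbf{L}-\beta_u\mathbf{L}_1\|_F^2$ and $g(\mathbf{S})=\lambda\|\mathbf{S}\|_1$, and consider the sequence $\{(\mathbf{L}_u^k,\mathbf{S}_u^k,\mathbf{Y}^k)\}_{k\ge0}$ generated from $\mathbf{S}_u^0=\mathbf{0}$, $\mathbf{Y}^0=\mathbf{0}$ by $$\mathbf{L}_u^{k+1}=\arg\min_{\mathbf{L}} f(\mathbf{L})+\tfrac{\mu_k}{2}\bigl\|\mathbf{L}-(\widehat{\mathbf{H}}_u-\mathbf{S}_u^k+\tfrac{1}{\mu_k}\mathbf{Y}^k)\bigr\|_F^2,$$ $$\mathbf{S}_u^{k+1}=\arg\min_{\mathbf{S}} g(\mathbf{S})+\tfrac{\mu_k}{2}\bigl\|\mathbf{S}-(\widehat{\mathbf{H}}_u-\mathbf{L}_u^{k+1}+\tfrac{1}{\mu_k}\mathbf{Y}^k)\bigr\|_F^2,$$ $$\mathbf{Y}^{k+1}=\mathbf{Y}^k+\mu_k(\widehat{\mathbf{H}}_u-\mathbf{L}_u^{k+1}-\mathbf{S}_u^{k+1}),\qquad \mu_{k+1}=\min\{\rho\mu_k,\mu_{\max}\}.$$ Then the sequence $\{\mathbf{Y}^k\}$ is 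bounded.
   Context: $\|\cdot\|_*$ is the nuclear norm, $\|\cdot\|_1$ the entrywise $\ell_1$-norm, $\|\cdot\|_F$ the Frobenius norm. These iterations are the ADMM scheme for $\min_{\mathbf{L},\mathbf{S}} f(\mathbf{L})+g(\mathbf{S})$ subject to $\mathbf{L}+\mathbf{S}=\widehat{\mathbf{H}}_u$. *)

From HB Require Import structures.
From mathcomp Require Import all_boot all_order all_algebra.
From mathcomp Require Import boolp classical_sets reals.
Local Open Scope classical_set_scope.
Set Implicit Arguments. Unset Strict Implicit. Unset Printing Implicit Defensive.
Import Order.TTheory GRing.Theory Num.Theory.
Local Open Scope ring_scope.

Definition l1norm (R : realType) (m n : nat) (A : 'M[R]_(m, n)) : R :=
  \sum_(i < m) \sum_(j < n) `|A i j|.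

Definition frob (R : realType) (m n : nat) (A : 'M[R]_(m, n)) : R :=
  Num.sqrt (\sum_(i < m) \sum_(j < n) (A i j) ^+ 2).

Definition is_svd (R : realType) (m n : nat) (A : 'M[R]_(m, n))
  (U : 'M[R]_m) (D : 'M[R]_(m, n)) (V : 'M[R]_n) : Prop :=
  [/\ U *m U^T = 1%:M, V *m V^T = 1%:M,
      (forall (i : 'I_m) (j : 'I_n), (i : nat) <> j -> D i j = 0),
      (forall (i : 'I_m) (j : 'I_n), 0 <= D i j) &
      A = U *m D *m V^T].

(* Nuclear norm = sum of singular values = trace of the diagonal factor of
   any SVD (chosen by classical choice; an SVD always exists). *)
Definition nuclear (R : realType) (m n : nat) (A : 'M[R]_(m, n)) : R :=
  xget 0 [set s | exists U D V, is_svd A U D V /\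
                   s = \sum_(i < m) \sum_(j < n) D i j].

From HB Require Import structures.
From mathcomp Require Import all_boot all_order all_algebra.
From mathcomp Require Import boolp reals.
From mathcomp Require Import lra.
Import Order.TTheory GRing.Theory Num.Theory.
Local Open Scope ring_scope.

(* Since Y^{k+1} = mu_k (T - S^{k+1}) with
   T = H - L^{k+1} + Y^k / mu_k, each entry of Y^{k+1} is mu_k times a
   residual of the l1-proximal problem solved by S^{k+1}.  Moving one entry
   of S^{k+1} by that residual d cancels it: the quadratic term drops by
   mu_k d^2 / 2 while the l1 term grows by at most lambda |d|, so optimality
   forces |mu_k d| <= 2 lambda, uniformly in k. *)

Lemma sum_mx_addZdelta {R : pzRingType} {V : zmodType} {m n} (F : R -> V)
    (A : 'M[R]_(m, n)) (t : R) i0 j0 :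
  \sum_(i < m) \sum_(j < n) F ((A + t *: delta_mx i0 j0) i j) =
  \sum_(i < m) \sum_(j < n) F (A i j) + F (A i0 j0 + t) - F (A i0 j0).
Proof.
rewrite !pair_big /= (bigD1 (i0, j0)) //= [in RHS](bigD1 (i0, j0)) //=.
rewrite !mxE !eqxx mulr1.
rewrite (eq_bigr (fun p => F (A p.1 p.2))) => [|[i j] /= hij]; last first.
  rewrite !mxE; congr F.
  have /negbTE -> : ~~ ((i == i0) && (j == j0)).
    by apply: contra hij => /andP[/eqP -> /eqP ->].
  by rewrite mulr0 addr0.
by rewrite [F (A i0 j0) + _]addrC addrAC addrK addrC.
Qed.

Lemma frob_sqr {R : realType} {m n} (A : 'M[R]_(m, n)) :
  frob A ^+ 2 = \sum_(i < m) \sum_(j < n) A i j ^+ 2.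
Proof.
by rewrite sqr_sqrtr // sumr_ge0 // => i _; rewrite sumr_ge0 // => j _; rewrite sqr_ge0.
Qed.

Lemma frob_le_const_mx {R : realType} {m n} (A : 'M[R]_(m, n)) (c : R) :
  (forall i j, `|A i j| <= c) -> frob A <= frob (const_mx c : 'M_(m, n)).
Proof.
move=> Ac; rewrite ler_sqrt; last first.
  by rewrite sumr_ge0 // => i _; rewrite sumr_ge0 // => j _; rewrite sqr_ge0.
apply: ler_sum => i _; apply: ler_sum => j _.
by rewrite mxE -real_normK ?num_real // lerXn2r ?nnegrE ?(le_trans _ (Ac i j)).
Qed.

Lemma norm_le_of_sqr_le_norm {R : realDomainType} {a b x : R} :
  0 < a -> 0 <= b -> a * x ^+ 2 <= b * `|x| -> a * `|x| <= b.
Proof.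
move=> a_gt0 b_ge0 le_ax2; have [->|x_neq0] := eqVneq x 0.
  by rewrite normr0 mulr0.
by rewrite -(ler_pM2r (_ : 0 < `|x|)) ?normr_gt0 // -mulrA -expr2 real_normK ?num_real.
Qed.

Lemma l1_prox_residual_bound {R : realType} {m n} {lambda mu : R}
    {T S : 'M[R]_(m, n)} :
  0 <= lambda -> 0 < mu ->
  (forall S' : 'M[R]_(m, n),
     lambda * l1norm S + mu / 2 * frob (S - T) ^+ 2
     <= lambda * l1norm S' + mu / 2 * frob (S' - T) ^+ 2) ->
  forall i j, `|mu * (T - S) i j| <= 2 * lambda.
Proof.
move=> lambda_ge0 mu_gt0 S_opt i j; set d := (T - S) i j.
have := S_opt (S + d *: delta_mx i j).
have -> : S + d *: delta_mx i j - T = (S - T) + d *: delta_mx i j by rewrite addrAC.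
rewrite !frob_sqr /l1norm !(sum_mx_addZdelta (fun x : R => x ^+ 2))
  !(sum_mx_addZdelta (fun x : R => `|x|)).
have -> : (S - T) i j = - d by rewrite /d -opprB mxE.
rewrite addNr expr0n sqrrN /= => le_opt.
have le_d2 : mu / 2 * d ^+ 2 <= lambda * `|d|.
  have := ler_wpM2l lambda_ge0 (ler_normD (S i j) d).
  nra.
have := norm_le_of_sqr_le_norm (divr_gt0 mu_gt0 (ltr0Sn _ 1)) lambda_ge0 le_d2.
rewrite normrM gtr0_norm //; lra.
Qed.

Lemma capped_geometric_gt0 {R : realDomainType} {rho mumax : R} {mu : nat -> R} :
  0 < rho -> 0 < mumax -> 0 < mu 0%N ->
  (forall k, mu k.+1 = Num.min (rho * mu k) mumax) -> forall k, 0 < mu k.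
Proof.
move=> rho_gt0 mumax_gt0 mu0_gt0 mu_S; elim=> [//|k mu_gt0].
by rewrite mu_S lt_min mulr_gt0.
Qed.

Theorem lemma1 (R : realType) (Ns Nb : nat) (H L1 : 'M[R]_(Ns, Nb))
  (lambda gamma beta mu0 rho mumax : R)
  (hlambda : 0 < lambda) (hgamma : 0 <= gamma) (hmu0 : 0 < mu0)
  (hrho : 1 < rho) (hmumax : mu0 <= mumax)
  (mu : nat -> R) (L S Y : nat -> 'M[R]_(Ns, Nb))
  (hmu_0 : mu 0%N = mu0)
  (hmu_S : forall k, mu k.+1 = Num.min (rho * mu k) mumax)
  (hS0 : S 0%N = 0) (hY0 : Y 0%N = 0)
  (hL : forall k (L' : 'M[R]_(Ns, Nb)),
     nuclear (L k.+1) + gamma * (frob (L k.+1 - beta *: L1)) ^+ 2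
       + mu k / 2 * (frob (L k.+1 - (H - S k + (mu k)^-1 *: Y k))) ^+ 2
     <= nuclear L' + gamma * (frob (L' - beta *: L1)) ^+ 2
       + mu k / 2 * (frob (L' - (H - S k + (mu k)^-1 *: Y k))) ^+ 2)
  (hS : forall k (S' : 'M[R]_(Ns, Nb)),
     lambda * l1norm (S k.+1)
       + mu k / 2 * (frob (S k.+1 - (H - L k.+1 + (mu k)^-1 *: Y k))) ^+ 2
     <= lambda * l1norm S'
       + mu k / 2 * (frob (S' - (H - L k.+1 + (mu k)^-1 *: Y k))) ^+ 2)
  (hY : forall k, Y k.+1 = Y k + mu k *: (H - L k.+1 - S k.+1)) :
  exists C : R, forall k, frob (Y k) <= C.
Proof.
have mu_gt0 : forall k, 0 < mu k.
  apply: (capped_geometric_gt0 (lt_trans ltr01 hrho) (lt_le_trans hmu0 hmumax) _ hmu_S).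
  by rewrite hmu_0.
have Y_entry_le k i j : `|Y k i j| <= 2 * lambda.
  case: k => [|k]; first by rewrite hY0 mxE normr0 mulr_ge0 ?ltW.
  have Y_residual : Y k.+1 = mu k *: ((H - L k.+1 + (mu k)^-1 *: Y k) - S k.+1).
    rewrite hY !scalerDr scalerA mulfV ?gt_eqF // scale1r.
    by rewrite addrA [Y k + _]addrC.
  rewrite Y_residual mxE.
  exact: l1_prox_residual_bound (ltW hlambda) (mu_gt0 k) (hS k) i j.
by exists (frob (const_mx (2 * lambda) : 'M_(Ns, Nb))) => k; apply: frob_le_const_mx.
Qed.
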